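(* Let $D=(E,\mathcal F)$ be a delta-matroid and let $X$ be a subset of $E$ that is not feasible, i.e. $X\notin\mathcal F$. Let $\mathcal B$ be the collection of all sets $Y\subseteq E$ such that $X\triangle Y\in\mathcal F$ and $|Y|$ is minimum among all subsets $Y'\subseteq E$ with $X\triangle Y'\in\mathcal F$. Then $\mathcal B$ is the collection of bases of a matroid with ground set $E$.
   Context: A delta-matroid $(E,\mathcal F)$ consists of a finite ground set $E$ and a non-empty collection $\mathcal F$ of subsets of $E$ (the feasible sets) satisfying the symmetric exchange axiom: for all $X,Y\in\mathcal F$ and every $e\in X\triangle Y$ there exists $f\in X\triangle Y$ (possibly $f=e$) with $X\triangle\{e,f\}\in\mathcal F$. *)

(* The ground set E is modelled as a finite type T
   (E = [set: T]); subsets of E are elements of {set T}. *)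
From mathcomp Require Import all_boot.
Set Implicit Arguments. Unset Strict Implicit. Unset Printing Implicit Defensive.

Definition symdiff (T : finType) (X Y : {set T}) : {set T} :=
  (X :\: Y) :|: (Y :\: X).

Definition delta_matroid (T : finType) (F : {set {set T}}) : Prop :=
  F != set0 /\
  forall X Y, X \in F -> Y \in F ->
    forall e, e \in symdiff X Y ->
      exists2 f, f \in symdiff X Y & symdiff X [set e; f] \in F.

Definition matroid_bases (T : finType) (B : {set {set T}}) : Prop :=
  B != set0 /\
  forall B1 B2, B1 \in B -> B2 \in B ->
    forall e, e \in B1 :\: B2 ->
      exists2 f, f \in B2 :\: B1 & (B1 :\ e) :|: [set f] \in B.

Definition min_transl (T : finType) (F : {set {set T}}) (X : {set T})
  : {set {set T}} :=
  [set Y : {set T} | (symdiff X Y \in F) &&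
     [forall Y' : {set T}, (symdiff X Y' \in F) ==> (#|Y| <= #|Y'|)]].

From mathcomp Require Import all_boot.

Set Implicit Arguments.
Unset Strict Implicit.
Unset Printing Implicit Defensive.

(* Translating every feasible set by X (Y |-> X \triangle Y) preserves the
   symmetric exchange axiom, so min_transl F X is the family of feasible sets
   of minimum size of another delta-matroid.  In any delta-matroid these form
   the bases of a matroid: if B1, B2 are of minimum size and e \in B1 :\: B2,
   exchange gives f with B1 \triangle {e, f} feasible; minimality forbids
   f \in B1 (the result would be smaller than B1), so f \in B2 :\: B1 and
   B1 \triangle {e, f} = (B1 :\ e) :|: [set f] has minimum size again. *)

Section SymmetricDifference.

Variable T : finType.
Implicit Types A B C : {set T}.

Lemma in_symdiff A B x : (x \in symdiff A B) = (x \in A) (+) (x \in B).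
Proof. by rewrite !inE; case: (x \in A); case: (x \in B). Qed.

Lemma symdiffA A B C : symdiff A (symdiff B C) = symdiff (symdiff A B) C.
Proof. by apply/setP => x; rewrite !in_symdiff addbA. Qed.

Lemma symdiffKl A B : symdiff A (symdiff A B) = B.
Proof. by apply/setP => x; rewrite !in_symdiff addKb. Qed.

Lemma symdiff_cancell A B C :
  symdiff (symdiff A B) (symdiff A C) = symdiff B C.
Proof. by apply/setP => x; rewrite !in_symdiff addbACA addbb. Qed.

Lemma symdiff_pair_subD1 A e f :
  e \in A -> f \in A -> symdiff A [set e; f] \subset A :\ e.
Proof.
move=> eA fA; apply/subsetP => x; rewrite in_symdiff !inE.
by case: eqP => [-> | _]; case: eqP => [-> | _]; rewrite ?eA ?fA ?addbF.
Qed.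

Lemma symdiff_pair_swap A e f :
  e \in A -> f \notin A -> symdiff A [set e; f] = (A :\ e) :|: [set f].
Proof.
move=> eA fA; apply/setP => x; rewrite in_symdiff !inE.
by case: eqP => [-> | _]; case: eqP => [-> | _];
  rewrite ?eA ?(negbTE fA) ?addbF ?orbF.
Qed.

End SymmetricDifference.

Definition twist (T : finType) (F : {set {set T}}) (X : {set T}) :=
  [set Y : {set T} | symdiff X Y \in F].

Definition min_feasible (T : finType) (F : {set {set T}}) :=
  [set Y in F | [forall Y' in F, #|Y| <= #|Y'|]].

Lemma min_transl_twist (T : finType) (F : {set {set T}}) X :
  min_transl F X = min_feasible (twist F X).
Proof.
apply/setP => Y; rewrite !inE; congr andb.
by apply: eq_forallb => Y'; rewrite inE.
Qed.

Lemma delta_matroid_twist (T : finType) (F : {set {set T}}) X :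
  delta_matroid F -> delta_matroid (twist F X).
Proof.
move=> [/set0Pn [Z ZF] exchF]; split.
  by apply/set0Pn; exists (symdiff X Z); rewrite inE symdiffKl.
move=> Y1 Y2; rewrite !inE => Y1F Y2F e eY12.
have := exchF _ _ Y1F Y2F e; rewrite symdiff_cancell => /(_ eY12) [f fY12 exF].
by exists f; rewrite // inE symdiffA.
Qed.

Section MinimumFeasibleSets.

Variables (T : finType) (F : {set {set T}}).
Hypothesis dmF : delta_matroid F.

Lemma min_feasible_neq0 : min_feasible F != set0.
Proof.
have [/set0Pn [Z ZF] _] := dmF.
have [Y YF minY] := arg_minnP (fun Y : {set T} => #|Y|) ZF.
apply/set0Pn; exists Y; rewrite inE; apply/andP; split=> //.
by apply/forall_inP => Y' /minY.
Qed.

Lemma min_feasible_exchange B1 B2 :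
  B1 \in min_feasible F -> B2 \in min_feasible F ->
  forall e, e \in B1 :\: B2 ->
  exists2 f, f \in B2 :\: B1 & (B1 :\ e) :|: [set f] \in min_feasible F.
Proof.
rewrite !inE => /andP [B1F /forall_inP minB1] /andP [B2F _] e.
rewrite inE => /andP [eB2 eB1].
have eB12 : e \in symdiff B1 B2 by rewrite in_symdiff eB1 (negbTE eB2).
have [f fB12 exF] := dmF.2 _ _ B1F B2F e eB12.
have fB1 : f \notin B1.
  apply: contraTN (minB1 _ exF) => fB1; rewrite -ltnNge.
  apply: leq_ltn_trans (subset_leq_card (symdiff_pair_subD1 eB1 fB1)) _.
  by rewrite (cardsD1 e B1) eB1.
have fB2 : f \in B2 by move: fB12; rewrite in_symdiff (negbTE fB1).
have swapE := symdiff_pair_swap eB1 fB1.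
exists f; first by rewrite inE fB1.
rewrite -swapE inE exF; apply/forall_inP => Y /minB1; apply: leq_trans.
by rewrite swapE setUC cardsU1 !inE (negbTE fB1) andbF (cardsD1 e B1) eB1.
Qed.

Lemma matroid_bases_min_feasible : matroid_bases (min_feasible F).
Proof. split; [exact: min_feasible_neq0 | exact: min_feasible_exchange]. Qed.

End MinimumFeasibleSets.

Theorem lemma4p3 (T : finType) (F : {set {set T}}) (X : {set T}) :
  delta_matroid F -> X \notin F -> matroid_bases (min_transl F X).
Proof.
move=> dmF _; rewrite min_transl_twist.
exact/matroid_bases_min_feasible/delta_matroid_twist.
Qed.
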